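(* There is an absolute constant $C>0$ such that the following holds. Let $n \geq 4$ be even and let $\mathcal{G}=\{G_t : t\in\mathbb{N}\}$ be an evolving graph on node set $[n]$. Suppose there exist an increasing sequence of reals $1=h_0\leq h_1<\dots<h_s=n/2$ and a non-increasing sequence of positive reals $k_1\geq\dots\geq k_s$ such that for every $t\in\mathbb{N}$ and every $i=1,\dots,s$ the graph $G_t$ is an $(h_i,k_i)$-expander. Then the flooding time of $\mathcal{G}$ is at most $$C\sum_{i=1}^s \frac{\log(h_i/h_{i-1})}{\log(1+k_i)}.$$
   Context: Logarithms are natural. An evolving graph is a sequence $\{G_t:t\in\mathbb{N}\}$ of graphs all on the node set $[n]=\{1,\dots,n\}$. For a graph $G=([n],E)$ and $I\subseteq[n]$, $N(I)=\{v\in[n]\setminus I : \{u,v\}\in E \text{ for some } u\in I\}$. $G$ is an $(h,k)$-expander if every $I\subseteq[n]$ with $|I|\leq h$ satisfies $|N(I)|\geq k|I|$. Flooding from a source $s\in[n]$: $I_0=\{s\}$, $I_{t+1}=I_t\cup N_t(I_t)$, where $N_t$ is the out-neighborhood in $G_t$. $T(s)$ is the first $t$ with $I_t=[n]$, and the flooding time of $\mathcal{G}$ is $\max_{s\in[n]}T(s)$. *)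

From Stdlib Require Import Reals.
From mathcomp Require Import all_boot.
Set Implicit Arguments. Unset Strict Implicit. Unset Printing Implicit Defensive.

(* A graph on node set [n] is modelled on 'I_n by an edge relation e;
   the (undirected) edge {u,v} is present iff e u v || e v u. *)
Definition graph (n : nat) := rel 'I_n.

Definition evolving_graph (n : nat) := nat -> graph n.

Definition nbhd (n : nat) (G : graph n) (I : {set 'I_n}) : {set 'I_n} :=
  [set v | (v \notin I) && [exists u in I, G u v || G v u]].

Definition expander (n : nat) (G : graph n) (h k : R) : Prop :=
  forall I : {set 'I_n}, Rle (INR #|I|) h -> Rle (Rmult k (INR #|I|)) (INR #|nbhd G I|).

Fixpoint flood (n : nat) (G : evolving_graph n) (s : 'I_n) (t : nat) : {set 'I_n} :=
  match t with
  | 0 => [set s]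
  | t'.+1 => flood G s t' :|: nbhd (G t') (flood G s t')
  end.

Definition sumR1 (s : nat) (F : nat -> R) : R :=
  \big[Rplus/R0]_(1 <= i < s.+1) F i.

(* The potential  pot x = \sum_i ln(clamp_[h_(i-1), h_i] x / h_(i-1)) / ln(1 + k_i)
   is a piecewise-logarithmic integral of dy / (y ln(1 + k(y))), where k(y) = k_i
   on [h_(i-1), h_i].  Since k is non-increasing, multiplying a set size x by
   at least 1 + k_i (as the expansion at level i does, whenever x <= h_i) raises
   the potential by at least 1.  While fewer than n/2 nodes are informed, the
   informed set therefore gains 1 unit of potential per round; afterwards the
   uninformed set, whose neighbourhood lies inside the neighbourhood of the
   informed set, loses 1 unit per round.  Both phases last at most
   pot (n/2) + 1 rounds, and pot (n/2) >= 1/2 because k_1 <= n - 1. *)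

From Stdlib Require Import Reals Lra ZArith.
From mathcomp Require Import all_boot zify.
From HB Require Import structures.

Set Implicit Arguments. Unset Strict Implicit. Unset Printing Implicit Defensive.

HB.instance Definition _ := Monoid.isComLaw.Build R R0 Rplus
  (fun a b c => esym (Rplus_assoc a b c)) Rplus_comm Rplus_0_l.

Local Open Scope R_scope.

Lemma ln_le x y : 0 < x -> x <= y -> ln x <= ln y.
Proof.
move=> x_gt0 /Rle_lt_or_eq_dec [xy|<-]; last exact: Rle_refl.
by left; apply: ln_increasing.
Qed.

Lemma Rle_div_r a b c : 0 < c -> a * c <= b -> a <= b / c.
Proof.
move=> c_gt0 acb; apply: (Rmult_le_reg_r c) => //.
by have -> : b / c * c = b by field; lra.
Qed.

Lemma INR_leq a b : (a <= b)%N -> INR a <= INR b.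
Proof. by move/leP; apply: le_INR. Qed.

Lemma INR_cardsC n (A : {set 'I_n}) : INR #|~: A| = INR n - INR #|A|.
Proof. by have := f_equal INR (cardsC A); rewrite card_ord plus_INR; lra. Qed.

Lemma nat_ceil x : 0 <= x -> exists N : nat, x < INR N <= x + 1.
Proof.
move=> x_ge0; have [up_gt up_le] := archimed x.
have up_ge0 : (0 <= up x)%Z by apply/Z.lt_le_incl/lt_0_IZR; lra.
by exists (Z.to_nat (up x)); rewrite INR_IZR_INZ Z2Nat.id //; lra.
Qed.

Lemma unit_drift_bound (P : nat -> Prop) (f : nat -> R) (M : R) :
  (forall t, P t.+1 -> P t /\ f t + 1 <= f t.+1) ->
  (forall t, P t -> 0 <= f t <= M) ->
  forall t, P t -> INR t <= M.
Proof.
move=> drift bounded.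
have P0 t : P t -> P 0%N by elim: t => [//|t IH] /drift[/IH].
have growth t : P t -> INR t + f 0%N <= f t.
  elim: t => [_|t IH]; first by rewrite /=; lra.
  by move=> /drift[/IH]; rewrite S_INR; lra.
move=> t Pt; have := growth t Pt; have := bounded _ Pt; have := bounded _ (P0 t Pt).
lra.
Qed.

Definition clamp (a b x : R) := Rmax a (Rmin b x).

Lemma clamp_gt0 a b x : 0 < a -> 0 < clamp a b x.
Proof. by rewrite /clamp /Rmax /Rmin; repeat case: Rle_dec; lra. Qed.

Lemma clamp_le_mono a b x y : a <= b -> x <= y -> clamp a b x <= clamp a b y.
Proof. by rewrite /clamp /Rmax /Rmin; repeat case: Rle_dec; lra. Qed.

Lemma clamp_id a b x : a <= x <= b -> clamp a b x = x.
Proof. by case=> ? ?; rewrite /clamp /Rmax /Rmin; repeat case: Rle_dec; lra. Qed.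

Lemma clamp_right a b x : a <= b -> b <= x -> clamp a b x = b.
Proof. by rewrite /clamp /Rmax /Rmin; repeat case: Rle_dec; lra. Qed.

Lemma clamp_left a b x : a <= b -> x <= a -> clamp a b x = a.
Proof. by rewrite /clamp /Rmax /Rmin; repeat case: Rle_dec; lra. Qed.

Lemma clamp_split a b c x : a <= b <= c ->
  clamp a c x * b = clamp a b x * clamp b c x.
Proof.
case=> ab bc; have ac : a <= c by lra.
case: (Rle_lt_dec x b) => [xb|bx].
- rewrite (clamp_left bc xb); case: (Rle_lt_dec x a) => [xa|ax].
    by rewrite !clamp_left.
  by rewrite !clamp_id //; lra.
- rewrite (clamp_right ab (Rlt_le _ _ bx)); case: (Rle_lt_dec x c) => [xc|cx].
    by rewrite !clamp_id //; lra.
  by rewrite !clamp_right //; lra.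
Qed.

Lemma ln_clamp_split a b c x : 0 < a -> a <= b <= c ->
  ln (clamp a c x) = ln (clamp a b x) + ln (clamp b c x) - ln b.
Proof.
move=> a_gt0 abc; have b_gt0 : 0 < b by lra.
have := f_equal ln (clamp_split x abc).
by rewrite !ln_mult //; try apply: clamp_gt0; lra.
Qed.

Lemma cards_setU_nbhd n (G : graph n) (A : {set 'I_n}) :
  #|A :|: nbhd G A| = (#|A| + #|nbhd G A|)%N.
Proof.
rewrite cardsU; suff -> : A :&: nbhd G A = set0 by rewrite cards0 subn0.
by apply/setP => v; rewrite !inE; case: (v \in A).
Qed.

Lemma nbhd_setC_closure n (G : graph n) (A : {set 'I_n}) :
  nbhd G (~: (A :|: nbhd G A)) \subset nbhd G A.
Proof.
apply/subsetP => v; rewrite !inE negbK => /andP[/orP[vA|//] /existsP[u]].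
rewrite !inE negb_or => /andP[/andP[uA uN] adj].
case/negP: uN; rewrite uA /=; apply/existsP; exists v.
by rewrite vA /= orbC.
Qed.

Lemma expander_le_pred_n n (G : graph n) (v : 'I_n) h k :
  1 <= h -> expander G h k -> k <= INR n - 1.
Proof.
move=> h_ge1 /(_ [set v]); rewrite cards1 /= Rmult_1_r => /(_ h_ge1) k_le.
have : nbhd G [set v] \subset ~: [set v] by apply/subsetP => u; rewrite !inE => /andP[].
by move/subset_leq_card/INR_leq; rewrite INR_cardsC cards1 /=; lra.
Qed.

Lemma floodS n (G : evolving_graph n) src t :
  flood G src t.+1 = flood G src t :|: nbhd (G t) (flood G src t).
Proof. by []. Qed.

Lemma flood_subS n (G : evolving_graph n) src t : flood G src t \subset flood G src t.+1.
Proof. by rewrite floodS subsetUl. Qed.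

Lemma flood_sub_le n (G : evolving_graph n) src t t' :
  (t <= t')%N -> flood G src t \subset flood G src t'.
Proof.
move/subnK <-; elim: (t' - t)%N => [|d IH]; first exact: subxx.
exact: subset_trans IH (flood_subS _ _ _).
Qed.

Lemma src_in_flood n (G : evolving_graph n) src t : src \in flood G src t.
Proof. by apply: (subsetP (flood_sub_le G src (leq0n t))); rewrite inE. Qed.

Lemma INR_card_ge1 (T : finType) (A : {set T}) : A != set0 -> 1 <= INR #|A|.
Proof. by rewrite -card_gt0 => /INR_leq. Qed.

Lemma card_flood_ge1 n (G : evolving_graph n) src t : 1 <= INR #|flood G src t|.
Proof. by apply: INR_card_ge1; apply/set0Pn; exists src; exact: src_in_flood. Qed.

Section Potential.

Variables (s : nat) (h k : nat -> R).
Hypotheses (h0 : h 0%N = 1) (h0_le_h1 : h 0%N <= h 1%N)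
  (h_incr : forall i, (1 <= i)%N -> (i < s)%N -> h i < h i.+1)
  (k_gt0 : forall i, (1 <= i)%N -> (i <= s)%N -> 0 < k i)
  (k_noninc : forall i, (1 <= i)%N -> (i < s)%N -> k i.+1 <= k i)
  (s_gt0 : (0 < s)%N).

Lemma h_le_mono i j : (i <= j)%N -> (j <= s)%N -> h i <= h j.
Proof.
move=> + js; elim: j js => [|j IH] js; first by rewrite leqn0 => /eqP->; lra.
rewrite leq_eqVlt => /orP[/eqP->|/(IH (ltnW js)) ij]; first lra.
case: j {IH} js ij => [|j] js ij; first lra.
by have := @h_incr j.+1 isT js; lra.
Qed.

Lemma h_ge1 i : (i <= s)%N -> 1 <= h i.
Proof. by move=> i_le_s; rewrite -h0; apply: h_le_mono. Qed.

Lemma k_le_anti i j : (1 <= i)%N -> (i <= j)%N -> (j <= s)%N -> k j <= k i.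
Proof.
move=> i_gt0 + js; elim: j js => [|j IH] js.
  by rewrite leqn0 => /eqP i0; rewrite i0 in i_gt0.
rewrite leq_eqVlt => /orP[/eqP->|ij]; first lra.
by have := IH (ltnW js) ij; have := k_noninc (leq_trans i_gt0 ij) js; lra.
Qed.

Lemma ln1k_gt0 i : (1 <= i)%N -> (i <= s)%N -> 0 < ln (1 + k i).
Proof.
move=> i_gt0 i_le_s; have := k_gt0 i_gt0 i_le_s => ki_gt0.
by rewrite -ln_1; apply: ln_increasing; lra.
Qed.

Definition pot_term i x := (ln (clamp (h i.-1) (h i) x) - ln (h i.-1)) / ln (1 + k i).

Definition pot m x := sumR1 m (fun i => pot_term i x).

Lemma pot0 x : pot 0 x = 0.
Proof. by rewrite /pot /sumR1 big_geq. Qed.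

Lemma potS m x : pot m.+1 x = pot m x + pot_term m.+1 x.
Proof. by rewrite /pot /sumR1 big_nat_recr. Qed.

Lemma pot_at_h m : (m <= s)%N ->
  pot m (h s) = sumR1 m (fun i => ln (h i / h i.-1) / ln (1 + k i)).
Proof.
move=> ms; apply: eq_big_nat => i /andP[i_gt0 im].
have i_le_s : (i <= s)%N by apply: leq_trans ms; rewrite -ltnS.
have hi_gt0 : 0 < h i.-1 by have := h_ge1 (leq_trans (leq_pred i) i_le_s); lra.
have hi_ge : h i.-1 <= h i by apply: h_le_mono; rewrite ?leq_pred.
rewrite /pot_term clamp_right //; last exact: h_le_mono.
unfold Rdiv; rewrite ln_mult ?ln_Rinv //; [lra | exact: Rinv_0_lt_compat].
Qed.

(* Levels below j contribute nothing, both clamps sitting at the top of the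
   level; levels from j on are weighted by 1 / ln (1 + k_i) >= 1 / ln (1 + k_j). *)
Lemma pot_diff_ge j x y m :
  (1 <= j)%N -> (j <= s)%N -> h j.-1 <= x -> x <= y -> (m <= s)%N ->
  (ln (clamp (h 0%N) (h m) y) - ln (clamp (h 0%N) (h m) x)) / ln (1 + k j)
  <= pot m y - pot m x.
Proof.
move=> j_gt0 js xj xy; have Lj_gt0 := ln1k_gt0 j_gt0 js.
have x_ge1 : 1 <= x by have := h_ge1 (leq_trans (leq_pred j) js); lra.
elim: m => [_|m IH ms].
  by rewrite !pot0 !clamp_right ?Rminus_diag /Rdiv ?Rmult_0_l; lra.
have hm_ge1 := h_ge1 (ltnW ms); have hm_le := h_le_mono (leqnSn m) ms.
have h0m : h 0%N <= h m <= h m.+1 by rewrite h0; lra.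
rewrite !(ln_clamp_split _ _ h0m) ?potS; try lra.
have {}IH := IH (ltnW ms).
have D_ge0 : 0 <= ln (clamp (h m) (h m.+1) y) - ln (clamp (h m) (h m.+1) x).
  have hm_gt0 : 0 < h m by lra.
  by have := ln_le (clamp_gt0 (h m.+1) x hm_gt0) (clamp_le_mono hm_le xy); lra.
set c := clamp (h m) (h m.+1) in D_ge0 *.
suff : (ln (c y) - ln (c x)) / ln (1 + k j) <= (ln (c y) - ln (c x)) / ln (1 + k m.+1).
  by rewrite /pot_term /= -/c => ?; unfold Rdiv in IH |- *; lra.
case: (leqP j m.+1) => [jm|mj].
- have Lm_gt0 := ln1k_gt0 (ltn0Sn m) ms.
  apply/Rmult_le_compat_l/Rinv_le_contravar => //.
  by apply/ln_le; have := k_le_anti j_gt0 jm ms; have := k_gt0 (ltn0Sn m) ms; lra.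
- have hmx : h m.+1 <= x.
    apply: Rle_trans xj; apply: h_le_mono (leq_trans (leq_pred j) js).
    by rewrite -ltnS prednK.
  by rewrite /c !clamp_right ?Rminus_diag /Rdiv ?Rmult_0_l; lra.
Qed.

Lemma pot_le_mono m x y : (m <= s)%N -> 1 <= x -> x <= y -> pot m x <= pot m y.
Proof.
move=> ms x_ge1 xy; have h0x : h 0%N <= x by lra.
have h0_gt0 : 0 < h 0%N by lra.
have := ln_le (clamp_gt0 (h m) x h0_gt0) (clamp_le_mono (h_le_mono (leq0n m) ms) xy).
have := ln1k_gt0 (leqnn 1) s_gt0.
have := pot_diff_ge (leqnn 1) s_gt0 h0x xy ms.
move=> diff_le L_gt0 D_ge0.
suff : 0 <= (ln (clamp (h 0%N) (h m) y) - ln (clamp (h 0%N) (h m) x)) / ln (1 + k 1%N).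
  by lra.
by apply: Rmult_le_pos; [lra | left; apply: Rinv_0_lt_compat].
Qed.

Lemma pot_at1 m : (m <= s)%N -> pot m 1 = 0.
Proof.
elim: m => [|m IH] ms; first exact: pot0.
have hm_ge1 := h_ge1 (ltnW ms); have hm_le := h_le_mono (leqnSn m) ms.
rewrite potS IH ?(ltnW ms) // /pot_term /= clamp_left //.
by rewrite Rminus_diag /Rdiv Rmult_0_l; lra.
Qed.

Lemma pot_bounds x : 1 <= x <= h s -> 0 <= pot s x <= pot s (h s).
Proof.
case=> x_ge1 xs; rewrite -(pot_at1 (leqnn s)).
by split; apply: pot_le_mono => //; lra.
Qed.

Lemma exists_bracket x : 1 <= x <= h s -> exists2 j, (0 < j <= s)%N & h j.-1 <= x <= h j.
Proof.
case=> x_ge1; rewrite -(prednK s_gt0); suff: forall m, (m < s)%N -> x <= h m.+1 ->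
    exists2 j, (0 < j <= m.+1)%N & h j.-1 <= x <= h j.
  by apply; rewrite prednK.
elim=> [|m IH] ms xm; first by exists 1%N => //=; lra.
case: (Rle_lt_dec x (h m.+1)) => [xm'|mx]; last by exists m.+2 => //=; lra.
have [j /andP[j_gt0 jm] xj] := IH (ltnW ms) xm'.
by exists j; rewrite ?j_gt0 ?(leqW jm).
Qed.

Lemma pot_gain x y : 1 <= x <= h s -> y <= h s ->
  (forall i, (1 <= i)%N -> (i <= s)%N -> x <= h i -> (1 + k i) * x <= y) ->
  pot s x + 1 <= pot s y.
Proof.
move=> xs ys expand; have [j /andP[j_gt0 js] [xj jx]] := exists_bracket xs.
have Lj_gt0 := ln1k_gt0 j_gt0 js; have := k_gt0 j_gt0 js => kj_gt0.
have kx_le := expand j j_gt0 js jx.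
have xy : x <= y by nra.
have := pot_diff_ge j_gt0 js xj xy (leqnn s).
rewrite !clamp_id; try lra.
have : ln ((1 + k j) * x) <= ln y by apply: ln_le; nra.
rewrite ln_mult; try lra.
move=> ln_le_y diff_le; suff : 1 <= (ln y - ln x) / ln (1 + k j) by lra.
by apply: Rle_div_r => //; lra.
Qed.

Lemma pot_top_ge_half : 1 + k 1%N <= h s * h s -> 1 / 2 <= pot s (h s).
Proof.
move=> k1_le; have hs_ge1 := h_ge1 (leqnn s); have k1_gt0 := k_gt0 (leqnn 1) s_gt0.
have L1_gt0 := ln1k_gt0 (leqnn 1) s_gt0.
have lnhs_gt0 : 0 < ln (h s) by rewrite -ln_1; apply: ln_increasing; nra.
have L1_le : ln (1 + k 1%N) <= 2 * ln (h s).
  have -> : 2 * ln (h s) = ln (h s * h s) by rewrite ln_mult; lra.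
  by apply: ln_le; lra.
have h01 : h 0%N <= 1 by lra.
have := pot_diff_ge (leqnn 1) s_gt0 h01 hs_ge1 (leqnn s).
rewrite pot_at1 // !clamp_id ?h0 ?ln_1; try lra.
suff : 1 / 2 <= (ln (h s) - 0) / ln (1 + k 1%N) by lra.
by apply: Rle_div_r => //; lra.
Qed.

Section Flooding.

Variables (n : nat) (G : evolving_graph n) (src : 'I_n).
Hypotheses (hs_half : h s = INR n / 2)
  (G_expander : forall t i, (1 <= i)%N -> (i <= s)%N -> expander (G t) (h i) (k i)).

Lemma pot_gain_nbhd t (X : {set 'I_n}) y :
  1 <= INR #|X| <= h s -> INR #|X| + INR #|nbhd (G t) X| <= y -> y <= h s ->
  pot s (INR #|X|) + 1 <= pot s y.
Proof.
move=> Xs Xy ys; apply: pot_gain => // i i_gt0 i_le_s Xi.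
by have := G_expander t i_gt0 i_le_s Xi; lra.
Qed.

Lemma flood_half_within N : pot s (h s) < INR N -> h s <= INR #|flood G src N|.
Proof.
move=> N_gt; apply: Rnot_lt_le => small; apply: (Rlt_not_le _ _ N_gt).
pose f t := pot s (INR #|flood G src t|).
apply: (@unit_drift_bound (fun t => INR #|flood G src t| < h s) f) small
  => [t small_t1|t small_t].
- have small_t : INR #|flood G src t| < h s.
    by apply: Rle_lt_trans small_t1; apply/INR_leq/subset_leq_card/flood_subS.
  split=> //; apply: (pot_gain_nbhd (t := t)); try lra.
    by split; [exact: card_flood_ge1 | lra].
  by rewrite floodS cards_setU_nbhd plus_INR; lra.
- by apply: pot_bounds; split; [exact: card_flood_ge1 | lra].
Qed.

Lemma flood_complete_within N d : h s <= INR #|flood G src N| -> pot s (h s) < INR d ->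
  flood G src (N + d) = [set: 'I_n].
Proof.
move=> half d_gt.
have rest_small t : (N <= t)%N -> INR #|~: flood G src t| <= h s.
  move/(flood_sub_le G src)/subset_leq_card/INR_leq.
  by rewrite INR_cardsC; lra.
case: (eqVneq (~: flood G src (N + d)) set0) => [empty | rest].
  by rewrite -[flood G src _]setCK empty setC0.
exfalso; apply: (Rlt_not_le _ _ d_gt).
pose f e := pot s (h s) - pot s (INR #|~: flood G src (N + e)|).
apply: (@unit_drift_bound (fun e => ~: flood G src (N + e) != set0) f) rest
  => [e rest_e1|e rest_e].
- rewrite /f addnS in rest_e1 *; set t := (N + e)%N in rest_e1 *.
  have shrink : ~: flood G src t.+1 \subset ~: flood G src t by rewrite setCS flood_subS.
  split.
    by apply: contraNneq rest_e1 => rest_e; rewrite -subset0 -rest_e.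
  have rest_t1 := rest_small t.+1 (leq_trans (leq_addr e N) (leqnSn t)).
  have rest_t := rest_small t (leq_addr e N).
  suff : pot s (INR #|~: flood G src t.+1|) + 1 <= pot s (INR #|~: flood G src t|) by lra.
  apply: (pot_gain_nbhd (t := t)) => //; first by split; [exact: INR_card_ge1 | lra].
  have rest_card : (#|~: flood G src t.+1| + #|nbhd (G t) (flood G src t)|)%N
                   = #|~: flood G src t|.
    have := cardsC (flood G src t); have := cardsC (flood G src t.+1).
    by rewrite floodS cards_setU_nbhd; lia.
  rewrite -plus_INR; apply/INR_leq; rewrite -rest_card leq_add2l.
  by rewrite floodS; apply/subset_leq_card/nbhd_setC_closure.
- have := rest_small (N + e)%N (leq_addr e N); have := INR_card_ge1 rest_e.
  have := @pot_bounds (INR #|~: flood G src (N + e)|).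
  by rewrite /f; lra.
Qed.

Lemma flooding_time :
  exists T : nat, flood G src T = [set: 'I_n] /\ INR T <= 2 * (pot s (h s) + 1).
Proof.
have [S_ge0 _] := pot_bounds (conj (h_ge1 (leqnn s)) (Rle_refl (h s))).
have [N [N_gt N_le]] := nat_ceil S_ge0.
exists (N + N)%N; split; last by rewrite plus_INR; lra.
exact: flood_complete_within (flood_half_within N_gt) N_gt.
Qed.

End Flooding.

End Potential.

Theorem flooding_time_le_sum n (G : evolving_graph n) (src : 'I_n) s (h k : nat -> R) :
  (4 <= n)%N -> h 0%N = 1 -> h 0%N <= h 1%N ->
  (forall i, (1 <= i)%N -> (i < s)%N -> h i < h i.+1) -> h s = INR n / 2 ->
  (forall i, (1 <= i)%N -> (i <= s)%N -> 0 < k i) ->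
  (forall i, (1 <= i)%N -> (i < s)%N -> k i.+1 <= k i) ->
  (forall t i, (1 <= i)%N -> (i <= s)%N -> expander (G t) (h i) (k i)) ->
  exists T : nat, flood G src T = [set: 'I_n] /\
    INR T <= 6 * sumR1 s (fun i => ln (h i / h i.-1) / ln (1 + k i)).
Proof.
move=> n_ge4 h0 h01 h_incr hs_half k_gt0 k_noninc G_exp.
have n_ge4R : 4 <= INR n by have := INR_leq n_ge4; rewrite /=; lra.
have s_gt0 : (0 < s)%N.
  by case: s hs_half {h_incr k_gt0 k_noninc G_exp} => [|//]; rewrite h0; lra.
have k1_le := expander_le_pred_n src (h_ge1 h0 h01 h_incr s_gt0) (G_exp 0%N 1%N isT s_gt0).
have S_ge_half : 1 / 2 <= pot h k s (h s).
  by apply: pot_top_ge_half => //; rewrite hs_half; nra.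
have [T [flooded T_le]] := flooding_time h0 h01 h_incr k_gt0 k_noninc s_gt0 src hs_half G_exp.
by exists T; split=> //; rewrite -(pot_at_h k h0 h01 h_incr (leqnn s)); lra.
Qed.

Local Close Scope R_scope.

Theorem mainTheorem1 :
  exists C : R, Rlt R0 C /\
  forall (n : nat), 4 <= n -> ~~ odd n ->
  forall (G : evolving_graph n) (s : nat) (h k : nat -> R),
    h 0 = R1 ->
    Rle (h 0) (h 1) ->
    (forall i, 1 <= i -> i < s -> Rlt (h i) (h i.+1)) ->
    h s = Rdiv (INR n) (IZR 2) ->
    (forall i, 1 <= i -> i <= s -> Rlt R0 (k i)) ->
    (forall i, 1 <= i -> i < s -> Rle (k i.+1) (k i)) ->
    (forall (t : nat) (i : nat), 1 <= i -> i <= s -> expander (G t) (h i) (k i)) ->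
    forall src : 'I_n,
      exists T : nat,
        flood G src T = [set: 'I_n] /\
        Rle (INR T) (Rmult C (sumR1 s (fun i => Rdiv (ln (Rdiv (h i) (h i.-1))) (ln (Rplus R1 (k i)))))).
Proof.
exists (IZR 6); split; first by lra.
move=> n n_ge4 _ G s h k h0 h01 h_incr hs_half k_gt0 k_noninc G_exp src.
exact: flooding_time_le_sum.
Qed.
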